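(* For every pseudo-torsion class $\mathcal P\subseteq\mathcal G$, the class $\mathcal P^\perp$ is a pseudo-torsionfree class and ${}^\perp(\mathcal P^\perp)=\mathcal P$. Dually, for every pseudo-torsionfree class $\mathcal Q$, ${}^\perp\mathcal Q$ is a pseudo-torsion class and $({}^\perp\mathcal Q)^\perp=\mathcal Q$. Hence $\mathcal P\mapsto\mathcal P^\perp$ is a bijection from pseudo-torsion classes to pseudo-torsionfree classes with inverse $\mathcal Q\mapsto{}^\perp\mathcal Q$.
   Context: Let $\Lambda$ be a finite dimensional algebra over a field and $\mathrm{mod}\text-\Lambda$ the category of finitely generated right $\Lambda$-modules. Fix a torsion class $\mathcal G\subseteq\mathrm{mod}\text-\Lambda$, i.e. a class of modules closed under isomorphisms, extensions and quotients. For $B\in\mathcal G$, a subobject of $B$ is a submodule of $B$ that lies in $\mathcal G$. A subobject $A\subseteq B$ is a strict subobject if $A\cap B'\in\mathcal G$ for every subobject $B'$ of $B$. A strict quotient of $B$ is $B/A$ with $A$ a strict subobject. A short exact sequence $0\to A\to B\to C\to0$ with $A,B,C\in\mathcal G$ is strict exact (and $B$ a strict extension of $A$ by $C$) if the image of $A$ is a strict subobject of $B$. A strict morphism is a homomorphism $f:A\to B$ with $A,B\in\mathcal G$ such that $\ker f\in\mathcal G$ is a strict subobject of $A$ and $\operatorname{im} f$ is a strict subobject of $B$. A pseudo-torsion class is a nonempty class $\mathcal P\subseteq\mathcal G$ closed under strict quotients and strict extensions. A pseudo-torsionfree class is a nonempty class $\mathcal Q\subseteq\mathcal G$ closed under strict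 subobjects and strict extensions. For $\mathcal X\subseteq\mathcal G$, $\mathcal X^\perp$ is the class of $Y\in\mathcal G$ such that every strict morphism $X\to Y$ with $X\in\mathcal X$ is zero, and ${}^\perp\mathcal X$ is the class of $Y\in\mathcal G$ such that every strict morphism $Y\to X$ with $X\in\mathcal X$ is zero. *)

(* A finitely generated right A-module is a finite-dimensional
   F-space F^n (row vectors) with a right action v |-> v *m ract a, where
   ract : A -> 'M_n is an F-linear unital multiplicative map. *)
From HB Require Import structures.
From mathcomp Require Import all_boot all_order all_algebra all_field.
Set Implicit Arguments. Unset Strict Implicit. Unset Printing Implicit Defensive.
Import GRing.Theory.
Local Open Scope ring_scope.

Section Modules.
Variables (F : fieldType) (A : falgType F).

Record rmod := RMod {
  rdim : nat;
  ract : A -> 'M[F]_rdim;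
  ract_lin : forall (c : F) (a b : A), ract (c *: a + b) = c *: ract a + ract b;
  ract1 : ract 1 = 1%:M;
  ractM : forall a b : A, ract (a * b) = ract a *m ract b
}.

Definition hom (M N : rmod) (f : 'M[F]_(rdim M, rdim N)) : Prop :=
  forall a : A, ract M a *m f = f *m ract N a.

Definition iso (M N : rmod) : Prop :=
  exists (f : 'M[F]_(rdim M, rdim N)) (g : 'M[F]_(rdim N, rdim M)),
    [/\ hom f, hom g, f *m g = 1%:M & g *m f = 1%:M].

Definition ses (M N K : rmod) (f : 'M[F]_(rdim M, rdim N))
  (g : 'M[F]_(rdim N, rdim K)) : Prop :=
  [/\ hom f, hom g, row_free f, row_full g & (f == kermx g)%MS].

Definition mclass := rmod -> Prop.

Definition torsion_class (G : mclass) : Prop :=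
  [/\ (forall M N, iso M N -> G M -> G N),
      (forall M N K f g, @ses M N K f g -> G M -> G K -> G N) &
      (forall M N (g : 'M[F]_(rdim M, rdim N)), hom g -> row_full g -> G M -> G N)].

Variable G : mclass.

Definition submod (B : rmod) k (U : 'M[F]_(k, rdim B)) : Prop :=
  forall a : A, (U *m ract B a <= U)%MS.

Definition subobj (B : rmod) k (U : 'M[F]_(k, rdim B)) : Prop :=
  submod U /\
  exists (M : rmod) (f : 'M[F]_(rdim M, rdim B)),
    [/\ G M, hom f, row_free f & (f == U)%MS].

Definition strict_subobj (B : rmod) k (U : 'M[F]_(k, rdim B)) : Prop :=
  subobj U /\
  forall k' (V : 'M[F]_(k', rdim B)), subobj V -> subobj (U :&: V)%MS.

Definition strict_quotient (B C : rmod) : Prop :=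
  G B /\ G C /\
  exists g : 'M[F]_(rdim B, rdim C),
    [/\ hom g, row_full g & strict_subobj (kermx g)].

Definition strict_ext (M N K : rmod) : Prop :=
  G M /\ G N /\ G K /\
  exists f g, [/\ @ses M N K f g & strict_subobj f].

Definition strict_mor (M N : rmod) (f : 'M[F]_(rdim M, rdim N)) : Prop :=
  [/\ G M, G N, hom f, strict_subobj (kermx f) & strict_subobj f].

Definition pseudo_torsion (P : mclass) : Prop :=
  [/\ (exists M, P M), (forall M, P M -> G M),
      (forall B C, strict_quotient B C -> P B -> P C) &
      (forall M N K, strict_ext M N K -> P M -> P K -> P N)].

Definition pseudo_torsionfree (Q : mclass) : Prop :=
  [/\ (exists M, Q M), (forall M, Q M -> G M),
      (forall B k (U : 'M[F]_(k, rdim B)), Q B -> strict_subobj U ->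
          forall M (f : 'M[F]_(rdim M, rdim B)), G M -> hom f -> row_free f ->
          (f == U)%MS -> Q M) &
      (forall M N K, strict_ext M N K -> Q M -> Q K -> Q N)].

Definition perp (X : mclass) : mclass := fun Y =>
  G Y /\ forall X0, X X0 -> forall f : 'M[F]_(rdim X0, rdim Y),
    strict_mor f -> f = 0.

Definition lperp (X : mclass) : mclass := fun Y =>
  G Y /\ forall X0, X X0 -> forall f : 'M[F]_(rdim Y, rdim X0),
    strict_mor f -> f = 0.

End Modules.

From Pilot Require Import Defs.
From mathcomp Require Import all_boot all_order all_algebra all_field.
From Stdlib Require Import Classical.
From mathcomp Require Import zify.

(* For a pseudo-torsion class P and M in ^⊥(P^⊥), take a strict subobject T
   of M of maximal dimension among those whose module lies in P.  If h is a
   strict morphism from a module of P into M/T, then the preimage of im h in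
   M is a strict extension of T by im h, hence again such a subobject, so by
   maximality h = 0: M/T lies in P^⊥.  The projection M -> M/T is then a strict
   morphism into P^⊥, so it vanishes and M = T comes from P.  Dually, for a
   pseudo-torsionfree class Q and Y in (^⊥Q)^⊥, a strict subobject U of Y of
   minimal dimension with Y/U in Q lies in ^⊥Q, so its strict inclusion into Y
   vanishes and Y = Y/U lies in Q.  All closure properties reduce to the fact
   that strict subobjects are stable under preimages and images along strict
   morphisms. *)

Set Implicit Arguments. Unset Strict Implicit. Unset Printing Implicit Defensive.
Import GRing.Theory.

Lemma ex_minimal (P : nat -> Prop) n :
  P n -> exists2 r, P r & forall s, P s -> r <= s.
Proof.
suff ex_below : forall k m, m <= k -> P m ->
    exists2 r, P r & forall s, P s -> r <= s.
  exact: (ex_below n n (leqnn n)).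
elim=> [|k IHk] m le_mk Pm.
  by exists m => // s _; move: le_mk; rewrite leqn0 => /eqP ->.
have [[s Ps lt_sm]|no_smaller] := classic (exists2 s, P s & s < m).
  by apply: (IHk s) => //; lia.
exists m => // s Ps; rewrite leqNgt; apply/negP => lt_sm.
by apply: no_smaller; exists s.
Qed.

Lemma ex_maximal (P : nat -> Prop) n : P 0 -> (forall r, P r -> r <= n) ->
  exists2 r, P r & forall s, P s -> s <= r.
Proof.
move=> P0 le_n.
have [d Pd min_d] : exists2 d, P (n - d) & forall s, P (n - s) -> d <= s.
  by apply: (ex_minimal (P := fun d => P (n - d)) (n := n)); rewrite subnn.
exists (n - d) => // s Ps; have := min_d (n - s); rewrite subKn ?le_n //.
by move=> /(_ Ps); have := le_n s Ps; lia.
Qed.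

Local Open Scope ring_scope.

Section Modules.
Variables (F : fieldType) (A : falgType F).
Local Notation rmod := (rmod A).
Local Notation hom := Defs.hom.
Local Notation ses := Defs.ses.

Lemma hom_mulmx (M N K : rmod) (f : 'M[F]_(rdim M, rdim N))
    (g : 'M[F]_(rdim N, rdim K)) :
  hom f -> hom g -> hom (f *m g).
Proof. by move=> hf hg a; rewrite mulmxA hf -!mulmxA hg. Qed.

Lemma hom0 (M N : rmod) : hom (0 : 'M[F]_(rdim M, rdim N)).
Proof. by move=> a; rewrite mulmx0 mul0mx. Qed.

Lemma hom1 (M : rmod) : hom (M:=M) (N:=M) 1%:M.
Proof. by move=> a; rewrite mulmx1 mul1mx. Qed.

Lemma submod_eqmx (B : rmod) k k' (U : 'M[F]_(k, rdim B)) (V : 'M[F]_(k', rdim B)) :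
  (U == V)%MS -> submod U -> submod V.
Proof. by move=> /eqmxP eUV sU a; rewrite -(eqmxMr _ eUV) -eUV. Qed.

Lemma submod_hom (M B : rmod) (h : 'M[F]_(rdim M, rdim B)) : hom h -> submod h.
Proof. by move=> hh a; rewrite -hh submxMl. Qed.

Lemma submod_cap (B : rmod) k k' (U : 'M[F]_(k, rdim B)) (V : 'M[F]_(k', rdim B)) :
  submod U -> submod V -> submod (U :&: V)%MS.
Proof.
move=> sU sV a; rewrite sub_capmx.
by rewrite (submx_trans (submxMr _ (capmxSl _ _)) (sU a))
           (submx_trans (submxMr _ (capmxSr _ _)) (sV a)).
Qed.

Definition preim m n k (h : 'M[F]_(m, n)) (S : 'M[F]_(k, n)) :=
  kermx (h *m cokermx S).

Lemma sub_preim m n k p (h : 'M[F]_(m, n)) (S : 'M[F]_(k, n)) (x : 'M[F]_(p, m)) :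
  (x <= preim h S)%MS = (x *m h <= S)%MS.
Proof. by rewrite sub_kermx submxE mulmxA. Qed.

Lemma submod_preim (M B : rmod) k (h : 'M[F]_(rdim M, rdim B)) (S : 'M[F]_(k, rdim B)) :
  hom h -> submod S -> submod (preim h S).
Proof.
move=> hh sS a; rewrite sub_preim -mulmxA hh mulmxA.
by apply: submx_trans (sS a); apply: submxMr; rewrite -sub_preim.
Qed.

Lemma preim_capM m n k p (h : 'M[F]_(m, n)) (S : 'M[F]_(k, n)) (V : 'M[F]_(p, m)) :
  ((preim h S :&: V) *m h :=: S :&: (V *m h))%MS.
Proof.
apply/eqmxP/andP; split.
  by rewrite sub_capmx -sub_preim capmxSl submxMr ?capmxSr.
case/submxP: (capmxSr S (V *m h)) => D eD.
rewrite {1}eD mulmxA submxMr // sub_capmx submxMl andbT sub_preim.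
by rewrite -mulmxA -eD capmxSl.
Qed.

Lemma preimM m n k (h : 'M[F]_(m, n)) (S : 'M[F]_(k, n)) :
  (preim h S *m h :=: S :&: h)%MS.
Proof.
have := preim_capM h S 1%:M; rewrite mul1mx => /eqmxP/andP[_ le_Sh].
apply/eqmxP/andP; split; first by rewrite sub_capmx -sub_preim submx_refl submxMl.
by apply: submx_trans le_Sh _; rewrite submxMr ?capmxSl.
Qed.

Lemma kermx_mulmx_free m n p (h : 'M[F]_(m, n)) (f : 'M[F]_(n, p)) :
  row_free f -> (kermx (h *m f) == kermx h)%MS.
Proof.
move=> ff; apply/andP; split; rewrite sub_kermx.
  by rewrite -(mulmx_free_eq0 _ ff) -mulmxA -sub_kermx.
by rewrite mulmxA mulmx_ker mul0mx.
Qed.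

Lemma kermx_mulmx m n p (h : 'M[F]_(m, n)) (g : 'M[F]_(n, p)) :
  (kermx (h *m g) == preim h (kermx g))%MS.
Proof.
apply/andP; split; first by rewrite sub_preim sub_kermx -mulmxA -sub_kermx.
by rewrite sub_kermx mulmxA -sub_kermx -sub_preim.
Qed.

Lemma row_full_eq1 m n (g : 'M[F]_(m, n)) : row_full g -> (g == 1%:M)%MS.
Proof. by move=> fg; rewrite /eqmx submx1 sub1mx. Qed.

Lemma hom_factor_free (X M B : rmod) (e : 'M[F]_(rdim M, rdim B))
    (k : 'M[F]_(rdim X, rdim B)) :
  hom e -> row_free e -> hom k -> (k <= e)%MS -> hom (k *m pinvmx e).
Proof.
move=> he fe hk ke a; apply: (row_free_inj fe).
by rewrite -mulmxA (mulmxKpV ke) hk -[RHS]mulmxA he [RHS]mulmxA (mulmxKpV ke).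
Qed.

Lemma hom_factor_full (B C D : rmod) (p : 'M[F]_(rdim B, rdim C))
    (k : 'M[F]_(rdim B, rdim D)) :
  hom p -> row_full p -> hom k -> (kermx p <= kermx k)%MS ->
  hom (pinvmx p *m k) /\ p *m (pinvmx p *m k) = k.
Proof.
move=> hp fp hk kk.
have pk : p *m (pinvmx p *m k) = k.
  apply/eqP; rewrite -subr_eq0 -{2}[k]mul1mx mulmxA -mulmxBl -sub_kermx.
  apply: submx_trans kk; rewrite sub_kermx mulmxBl mul1mx -mulmxA mulVpmx //.
  by rewrite mulmx1 subrr.
split=> // a; apply: (row_full_inj fp).
by rewrite mulmxA -hp -mulmxA pk hk [RHS]mulmxA pk.
Qed.

Lemma row_free_pinv_full m n p (c : 'M[F]_(m, n)) (k : 'M[F]_(m, p)) :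
  row_full c -> (kermx k <= kermx c)%MS -> row_free (pinvmx c *m k).
Proof.
move=> fc le_kc; rewrite -kermx_eq0 -submx0.
have cK := mulmxKpV (submx_full (kermx (pinvmx c *m k)) fc).
have : (kermx (pinvmx c *m k) *m pinvmx c <= kermx c)%MS.
  by apply: submx_trans le_kc; rewrite sub_kermx -mulmxA mulmx_ker.
by rewrite sub_kermx cK => /eqP ->; rewrite sub0mx.
Qed.

(* N, embedded in B by E, is an extension of X by K, where e0 and eK embed X
   and K onto E :&: kermx f and E *m f. *)
Lemma ses_sub_rmod (B C X N K : rmod) (f : 'M[F]_(rdim B, rdim C))
    (e0 : 'M[F]_(rdim X, rdim B)) (E : 'M[F]_(rdim N, rdim B))
    (eK : 'M[F]_(rdim K, rdim C)) :
  hom f -> hom e0 -> row_free e0 -> hom E -> row_free E -> hom eK -> row_free eK ->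
  (e0 == E :&: kermx f)%MS -> (eK == E *m f)%MS ->
  exists2 f0, f0 *m E = e0 & exists g, ses (M:=X) (N:=N) (K:=K) f0 g.
Proof.
move=> hf he0 fe0 hE fE heK feK /eqmxP e0E /eqmxP eKE.
have le_EfK : (E *m f <= eK)%MS by rewrite eKE submx_refl.
set g := E *m f *m pinvmx eK.
have hg : hom g by apply: hom_factor_free => //; exact: hom_mulmx.
have geK : g *m eK = E *m f by rewrite mulmxKpV.
have fg : row_full g by rewrite /row_full -(mxrankMfree _ feK) geK -(eqP feK) eKE.
have le_e0E : (e0 <= E)%MS by rewrite e0E capmxSl.
set f0 := e0 *m pinvmx E.
have f0E : f0 *m E = e0 by rewrite mulmxKpV.
have ff0 : row_free f0 by rewrite /row_free -(mxrankMfree _ fE) f0E.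
have kg : (f0 == kermx g)%MS.
  apply/andP; split.
    rewrite sub_kermx -(mulmx_free_eq0 _ feK) -mulmxA geK mulmxA f0E -sub_kermx.
    by rewrite e0E capmxSr.
  rewrite -(submxMfree _ _ fE) f0E e0E sub_capmx submxMl /=.
  by rewrite sub_kermx -mulmxA -geK mulmxA mulmx_ker mul0mx.
by exists f0 => //; exists g; split=> //; exact: hom_factor_free.
Qed.

(* Dually, Y / (kermx c *m E) is an extension of N / kermx c by Y / N. *)
Lemma ses_quot_rmod (Y N C' K C : rmod) (E : 'M[F]_(rdim N, rdim Y))
    (q : 'M[F]_(rdim Y, rdim C')) (c : 'M[F]_(rdim N, rdim K))
    (g : 'M[F]_(rdim Y, rdim C)) :
  hom E -> row_free E -> hom q -> row_full q -> hom c -> row_full c ->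
  hom g -> row_full g -> (kermx q == kermx c *m E)%MS -> (kermx g == E)%MS ->
  exists2 f0, (f0 :=: E *m q)%MS & exists g0, ses (M:=K) (N:=C') (K:=C) f0 g0.
Proof.
move=> hE fE hq fq hc fc hg fg /eqmxP kqW /eqmxP kgE.
have le_kc : (kermx c <= kermx (E *m q))%MS.
  by rewrite sub_kermx mulmxA -sub_kermx kqW submx_refl.
have [hf0 cf0] := hom_factor_full hc fc (hom_mulmx hE hq) le_kc.
set f0 := pinvmx c *m (E *m q) in hf0 cf0.
have le_kq : (kermx q <= kermx g)%MS by rewrite kqW kgE submxMl.
have [hg0 qg0] := hom_factor_full hq fq hg le_kq.
set g0 := pinvmx q *m g in hg0 qg0.
have f0Eq : (f0 :=: E *m q)%MS by rewrite -cf0; apply: eqmx_sym; exact: eqmxMfull.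
have ff0 : row_free f0.
  apply: row_free_pinv_full fc _; rewrite -(submxMfree _ _ fE) -kqW sub_kermx.
  by rewrite -mulmxA mulmx_ker.
have fg0 : row_full g0.
  by rewrite /row_full eqn_leq rank_leq_col -{1}(eqP fg) -qg0 mxrankM_maxr.
have Eg : E *m g = 0 by apply/eqP; rewrite -sub_kermx kgE submx_refl.
have kg0 : (f0 == kermx g0)%MS.
  apply/andP; split; first by rewrite sub_kermx -mulmxA -(mulmxA E) qg0 Eg mulmx0.
  have qK := mulmxKpV (submx_full (kermx g0) fq).
  rewrite -qK f0Eq; apply: submxMr.
  by rewrite -kgE sub_kermx -qg0 mulmxA qK mulmx_ker.
by exists f0 => //; exists g0.
Qed.

Section SubModule.
Variables (B : rmod) (r : nat) (E : 'M[F]_(r, rdim B)).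
Hypotheses (fE : row_free E) (sE : submod E).

Definition sub_ract (a : A) : 'M[F]_r := E *m ract B a *m pinvmx E.

Lemma sub_ract_lin c a b : sub_ract (c *: a + b) = c *: sub_ract a + sub_ract b.
Proof. by rewrite /sub_ract ract_lin mulmxDr mulmxDl -scalemxAr -scalemxAl. Qed.

Lemma sub_ract1 : sub_ract 1 = 1%:M.
Proof. by rewrite /sub_ract ract1 mulmx1 mulmxVp. Qed.

Lemma sub_ractM a b : sub_ract (a * b) = sub_ract a *m sub_ract b.
Proof.
have EK := mulmxKpV (sE a); rewrite /sub_ract; move: (pinvmx E) EK => P EK.
by rewrite ractM !mulmxA EK.
Qed.

Definition sub_rmod : rmod := RMod sub_ract_lin sub_ract1 sub_ractM.

Lemma hom_sub_rmod : hom (M:=sub_rmod) (N:=B) E.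
Proof. by move=> a; rewrite /= /sub_ract (mulmxKpV (sE a)). Qed.

End SubModule.

Lemma sub_rmod_exists (B : rmod) k (U : 'M[F]_(k, rdim B)) : submod U ->
  exists N (e : 'M[F]_(rdim N, rdim B)), [/\ hom e, row_free e & (e == U)%MS].
Proof.
move=> sU; have fE := row_base_free U.
have sE : submod (row_base U) by apply: submod_eqmx sU; rewrite !eq_row_base submx_refl.
exists (sub_rmod fE sE), (row_base U); split=> //; first exact: hom_sub_rmod.
by rewrite !eq_row_base submx_refl.
Qed.

Section QuotModule.
Variables (B : rmod) (m : nat) (Q : 'M[F]_(rdim B, m)).
Hypotheses (fQ : row_full Q) (sQ : submod (kermx Q)).

Definition quot_ract (a : A) : 'M[F]_m := pinvmx Q *m ract B a *m Q.

Lemma ract_quot a : ract B a *m Q = Q *m quot_ract a.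
Proof.
rewrite /quot_ract; have QK := mulVpmx fQ; move: (pinvmx Q) QK => P QK.
apply/eqP; rewrite -subr_eq0 !mulmxA -{1}[ract B a]mul1mx -!mulmxBl.
rewrite -sub_kermx; apply: submx_trans (sQ a); apply: submxMr.
by rewrite sub_kermx mulmxBl mul1mx -mulmxA QK mulmx1 subrr.
Qed.

Lemma quot_ract_lin c a b : quot_ract (c *: a + b) = c *: quot_ract a + quot_ract b.
Proof. by rewrite /quot_ract ract_lin mulmxDr mulmxDl -scalemxAr -scalemxAl. Qed.

Lemma quot_ract1 : quot_ract 1 = 1%:M.
Proof. by rewrite /quot_ract ract1 mulmx1 mulVpmx. Qed.

Lemma quot_ractM a b : quot_ract (a * b) = quot_ract a *m quot_ract b.
Proof.
transitivity (pinvmx Q *m (ract B a *m (ract B b *m Q))).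
  by rewrite /quot_ract ractM !mulmxA.
by rewrite ract_quot (mulmxA (ract B a)) ract_quot !mulmxA mulVpmx // mul1mx.
Qed.

Definition quot_rmod : rmod := RMod quot_ract_lin quot_ract1 quot_ractM.

Lemma hom_quot_rmod : hom (M:=B) (N:=quot_rmod) Q.
Proof. by move=> a; rewrite ract_quot. Qed.

End QuotModule.

(* Q := col_base (cokermx U) has kernel U because cokermx U = Q *m row_base (cokermx U). *)
Lemma quot_rmod_exists (B : rmod) k (U : 'M[F]_(k, rdim B)) : submod U ->
  exists C (q : 'M[F]_(rdim B, rdim C)), [/\ hom q, row_full q & (kermx q == U)%MS].
Proof.
move=> sU; set Q := col_base (cokermx U).
have fQ : row_full Q by exact: col_base_full.
have kQ : (kermx Q == U)%MS.
  apply/andP; split.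
    rewrite submxE.
    have -> : kermx Q *m cokermx U = kermx Q *m Q *m row_base (cokermx U).
      by rewrite -mulmxA mulmx_base.
    by rewrite mulmx_ker mul0mx.
  rewrite sub_kermx -(mulmx_free_eq0 _ (row_base_free (cokermx U))) -mulmxA.
  by rewrite mulmx_base -submxE.
have sQ : submod (kermx Q) by apply: submod_eqmx sU; rewrite andbC.
by exists (quot_rmod fQ sQ), Q; split=> //; exact: hom_quot_rmod.
Qed.

Definition zero_ract (a : A) : 'M[F]_0 := 0.

Lemma zero_ract_lin c a b : zero_ract (c *: a + b) = c *: zero_ract a + zero_ract b.
Proof. by rewrite [LHS]flatmx0 [RHS]flatmx0. Qed.

Lemma zero_ract1 : zero_ract 1 = 1%:M.
Proof. by rewrite [LHS]flatmx0 [RHS]flatmx0. Qed.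

Lemma zero_ractM a b : zero_ract (a * b) = zero_ract a *m zero_ract b.
Proof. by rewrite [LHS]flatmx0 [RHS]flatmx0. Qed.

Definition zero_rmod : rmod := RMod zero_ract_lin zero_ract1 zero_ractM.

End Modules.

Section TorsionClass.
Variables (F : fieldType) (A : falgType F) (G : mclass A).
Hypothesis tG : torsion_class G.
Local Notation rmod := (rmod A).
Local Notation hom := Defs.hom.
Local Notation ses := Defs.ses.
Local Notation subobj := (subobj G).
Local Notation strict := (strict_subobj G).

Lemma G_quot (M N : rmod) (g : 'M[F]_(rdim M, rdim N)) :
  hom g -> row_full g -> G M -> G N.
Proof. by case: tG => _ _; apply. Qed.

Lemma G_ext (M N K : rmod) f g : ses (M:=M) (N:=N) (K:=K) f g -> G M -> G K -> G N.
Proof. by case: tG => _ + _; apply. Qed.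

Lemma G_zero (M : rmod) : G M -> G (zero_rmod A).
Proof. by apply: G_quot (hom0 M (zero_rmod A)) _; rewrite /row_full mxrank0. Qed.

Lemma G_subobj_rmod (B N : rmod) k (U : 'M[F]_(k, rdim B)) (e : 'M[F]_(rdim N, rdim B)) :
  subobj U -> hom e -> row_free e -> (e == U)%MS -> G N.
Proof.
move=> [_ [M [f [GM hf ff /eqmxP fU]]]] he fe /eqmxP eU.
have le_fe : (f <= e)%MS by rewrite eU fU.
apply: G_quot (hom_factor_free he fe hf le_fe) _ GM.
by rewrite /row_full -(mxrankMfree _ fe) mulmxKpV // -(eqP fe) eU fU.
Qed.

Lemma hom_image_factor (M B : rmod) (h : 'M[F]_(rdim M, rdim B)) : G M -> hom h ->
  exists K (c : 'M[F]_(rdim M, rdim K)) (e : 'M[F]_(rdim K, rdim B)),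
    [/\ G K, hom c & row_full c] /\ [/\ hom e, row_free e & c *m e = h].
Proof.
move=> GM hh; have [K [e [he fe /eqmxP eh]]] := sub_rmod_exists (submod_hom hh).
have le_he : (h <= e)%MS by rewrite eh.
have ce : h *m pinvmx e *m e = h by rewrite mulmxKpV.
have hc := hom_factor_free he fe hh le_he.
have fc : row_full (h *m pinvmx e).
  by rewrite /row_full -(mxrankMfree _ fe) ce -(eqP fe) eh.
by exists K, (h *m pinvmx e), e; split; split=> //; apply: G_quot hc fc GM.
Qed.

Lemma subobj_eqmx (B : rmod) k k' (U : 'M[F]_(k, rdim B)) (V : 'M[F]_(k', rdim B)) :
  (U == V)%MS -> subobj U -> subobj V.
Proof.
move=> eUV [sU [M [f [GM hf ff /eqmxP fU]]]].
split; first exact: submod_eqmx eUV sU.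
by exists M, f; split=> //; apply/eqmxP; exact: eqmx_trans fU (elimT eqmxP eUV).
Qed.

Lemma subobj_hom (M B : rmod) (h : 'M[F]_(rdim M, rdim B)) :
  G M -> hom h -> subobj h.
Proof.
move=> GM hh; split; first exact: submod_hom.
have [K [c [e [[GK _ fc] [he fe <-]]]]] := hom_image_factor GM hh.
by exists K, e; split=> //; apply/eqmxP/eqmx_sym; exact: eqmxMfull.
Qed.

Lemma subobj_mulmx (B C : rmod) k (U : 'M[F]_(k, rdim B)) (f : 'M[F]_(rdim B, rdim C)) :
  subobj U -> hom f -> subobj (U *m f).
Proof.
move=> [_ [M [e [GM he _ /eqmxP eU]]]] hf.
apply: (@subobj_eqmx _ _ _ (e *m f)); first by apply/eqmxP; exact: eqmxMr.
exact: subobj_hom GM (hom_mulmx he hf).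
Qed.

Lemma subobj_ext (B C : rmod) k (W : 'M[F]_(k, rdim B)) (f : 'M[F]_(rdim B, rdim C)) :
  submod W -> hom f -> subobj (W :&: kermx f)%MS -> subobj (W *m f) -> subobj W.
Proof.
move=> sW hf [_ [M0 [e0 [GM0 he0 fe0 /eqmxP e0W]]]].
move=> [_ [K0 [eK [GK0 heK feK /eqmxP eKW]]]].
have [N [E [hE fE /eqmxP EW]]] := sub_rmod_exists sW.
have e0E : (e0 == E :&: kermx f)%MS.
  by apply/eqmxP; apply: eqmx_trans e0W (cap_eqmx (eqmx_sym EW) (eqmx_refl _)).
have eKE : (eK == E *m f)%MS.
  by apply/eqmxP; apply: eqmx_trans eKW (eqmxMr f (eqmx_sym EW)).
have [f0 _ [g ses0]] := ses_sub_rmod hf he0 fe0 hE fE heK feK e0E eKE.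
split=> //; exists N, E; split=> //; first exact: G_ext ses0 GM0 GK0.
by apply/eqmxP.
Qed.

Lemma strict_eqmx (B : rmod) k k' (U : 'M[F]_(k, rdim B)) (V : 'M[F]_(k', rdim B)) :
  (U == V)%MS -> strict U -> strict V.
Proof.
move=> eUV [sU capU]; split; first exact: subobj_eqmx eUV sU.
move=> k'' W sW; apply: subobj_eqmx (capU _ _ sW); apply/eqmxP.
exact: cap_eqmx (elimT eqmxP eUV) (eqmx_refl W).
Qed.

Lemma strictW (B : rmod) k (U : 'M[F]_(k, rdim B)) : strict U -> subobj U.
Proof. by case. Qed.

Lemma strict_submod (B : rmod) k (U : 'M[F]_(k, rdim B)) : strict U -> submod U.
Proof. by case=> [[]]. Qed.

Lemma strict1 (B : rmod) : G B -> strict (1%:M : 'M[F]_(rdim B)).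
Proof.
move=> GB; split; first exact: subobj_hom GB (hom1 B).
move=> k V sV; apply: subobj_eqmx sV.
by rewrite capmxSr sub_capmx submx1 submx_refl.
Qed.

Lemma strict0 (B : rmod) k : G B -> strict (0 : 'M[F]_(k, rdim B)).
Proof.
move=> GB; have s0 : subobj (0 : 'M[F]_(k, rdim B)).
  apply: subobj_eqmx (subobj_hom (G_zero GB) (hom0 (zero_rmod A) B)).
  by rewrite !sub0mx.
split=> // k' V _; apply: subobj_eqmx s0.
by rewrite sub0mx (submx_trans (capmxSl _ _)) ?sub0mx.
Qed.

Lemma strict_row_full (B : rmod) m (g : 'M[F]_(m, rdim B)) :
  G B -> row_full g -> strict g.
Proof. by move=> GB /row_full_eq1; rewrite andbC => /strict_eqmx; apply; exact: strict1. Qed.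

Lemma strict_kermx_free (M B : rmod) (e : 'M[F]_(rdim M, rdim B)) :
  G M -> row_free e -> strict (kermx e).
Proof. by move=> GM; rewrite -kermx_eq0 => /eqP ->; exact: strict0. Qed.

(* preim h S is an extension of kermx h by S :&: h, and likewise after
   intersecting with any subobject V. *)
Lemma strict_preim (X N : rmod) k (h : 'M[F]_(rdim X, rdim N)) (S : 'M[F]_(k, rdim N)) :
  G X -> hom h -> strict (kermx h) -> strict S -> strict (preim h S).
Proof.
move=> GX hh [skh capkh] [sS capS].
have sp : submod (preim h S) by apply: submod_preim hh sS.1.
have le_kh : (kermx h <= preim h S)%MS by rewrite sub_preim mulmx_ker sub0mx.
split.
  apply: (subobj_ext sp hh).
    by apply: subobj_eqmx skh; rewrite capmxSr sub_capmx le_kh submx_refl.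
  apply: subobj_eqmx (capS _ _ (subobj_hom GX hh)).
  by apply/eqmxP/eqmx_sym; exact: preimM.
move=> k' V sV; apply: (subobj_ext (submod_cap sp sV.1) hh).
  apply: subobj_eqmx (capkh _ _ sV); rewrite !sub_capmx.
  rewrite (submx_trans (capmxSl _ _) le_kh) capmxSr capmxSl capmxSr /=.
  exact: submx_trans (capmxSl _ _) (capmxSr _ _).
apply: subobj_eqmx (capS _ _ (subobj_mulmx sV hh)).
by apply/eqmxP/eqmx_sym; exact: preim_capM.
Qed.

Lemma strict_img (N Y : rmod) k (h : 'M[F]_(rdim N, rdim Y)) (S : 'M[F]_(k, rdim N)) :
  hom h -> subobj (kermx h) -> strict h -> strict S -> strict (S *m h).
Proof.
move=> hh skh [sh caph] [sS capS]; split; first exact: subobj_mulmx.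
move=> k' V sV.
have sp : subobj (preim h V).
  apply: (subobj_ext (submod_preim hh sV.1) hh).
    apply: subobj_eqmx skh; rewrite capmxSr sub_capmx submx_refl andbT.
    by rewrite sub_preim mulmx_ker sub0mx.
  apply: subobj_eqmx (caph _ _ sV); rewrite capmxC.
  by apply/eqmxP/eqmx_sym; exact: preimM.
apply: subobj_eqmx (subobj_mulmx (capS _ _ sp) hh).
by rewrite capmxC [(S *m h :&: V)%MS]capmxC; apply/eqmxP; exact: preim_capM.
Qed.

Lemma strict_preim_free (M B : rmod) k (e : 'M[F]_(rdim M, rdim B)) (S : 'M[F]_(k, rdim B)) :
  G M -> hom e -> row_free e -> strict S -> strict (preim e S).
Proof. by move=> GM he fe; apply: strict_preim; last exact: strict_kermx_free. Qed.

Lemma strict_img_free (M B : rmod) k (e : 'M[F]_(rdim M, rdim B)) (T : 'M[F]_(k, rdim M)) :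
  G M -> hom e -> row_free e -> strict e -> strict T -> strict (T *m e).
Proof. by move=> GM he fe; apply: strict_img; last exact/strictW/strict_kermx_free. Qed.

Section Orthogonal.
Variable X : mclass A.
Local Notation smor := (strict_mor G).

Lemma perp_zero (M : rmod) : G M -> perp G X (zero_rmod A).
Proof.
move=> GM; split; first exact: G_zero GM.
by move=> X0 _ f _; rewrite [f]thinmx0 [RHS]thinmx0.
Qed.

Lemma lperp_zero (M : rmod) : G M -> lperp G X (zero_rmod A).
Proof.
move=> GM; split; first exact: G_zero GM.
by move=> X0 _ f _; rewrite [f]flatmx0 [RHS]flatmx0.
Qed.

Lemma perp_strict_subobj (B M : rmod) k (U : 'M[F]_(k, rdim B)) (f : 'M[F]_(rdim M, rdim B)) :
  perp G X B -> strict U -> G M -> hom f -> row_free f -> (f == U)%MS -> perp G X M.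
Proof.
move=> [GB perpB] sU GM hf ff fU; split=> // X0 XX0 h [GX _ hh skh sh].
have shf : smor (h *m f).
  split=> //; first exact: hom_mulmx.
    by apply: strict_eqmx skh; rewrite andbC; exact: kermx_mulmx_free.
  apply: (strict_img_free GM hf ff _ sh).
  by apply: strict_eqmx sU; rewrite andbC.
by apply/eqP; rewrite -(mulmx_free_eq0 _ ff) (perpB _ XX0 _ shf).
Qed.

Lemma perp_strict_ext (M N K : rmod) :
  strict_ext G M N K -> perp G X M -> perp G X K -> perp G X N.
Proof.
move=> [GM [GN [GK [f [g [[hf hg ff fg /eqmxP kg] sf]]]]]] [_ perpM] [_ perpK].
split=> // X0 XX0 h [GX _ hh skh sh].
have sk : strict (kermx g) by apply: strict_eqmx sf; apply/eqmxP.
have shg : smor (h *m g).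
  split=> //; first exact: hom_mulmx.
    apply: strict_eqmx (strict_preim GX hh skh sk).
    by rewrite andbC; exact: kermx_mulmx.
  exact: (strict_img hg (strictW sk) (strict_row_full GK fg) sh).
have le_hf : (h <= f)%MS by rewrite kg sub_kermx (perpK _ XX0 _ shg).
have eh : h *m pinvmx f *m f = h by rewrite mulmxKpV.
have sh' : smor (h *m pinvmx f).
  split=> //; first exact: hom_factor_free.
    by apply: strict_eqmx skh; have := kermx_mulmx_free (h *m pinvmx f) ff; rewrite eh.
  apply: strict_eqmx (strict_preim_free GM hf ff sh).
  by rewrite -(submxMfree _ _ ff) eh -sub_preim submx_refl sub_preim eh submx_refl.
by rewrite -eh (perpM _ XX0 _ sh') mul0mx.
Qed.

Lemma perp_pseudo_torsionfree (M : rmod) : G M -> pseudo_torsionfree G (perp G X).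
Proof.
move=> GM; split; first by exists (zero_rmod A); exact: perp_zero GM.
- by move=> N [].
- by move=> B k U perpB sU N f; exact: perp_strict_subobj.
exact: perp_strict_ext.
Qed.

Lemma lperp_strict_quot (B C : rmod) :
  strict_quotient G B C -> lperp G X B -> lperp G X C.
Proof.
move=> [GB [GC [g [hg fg skg]]]] [_ lperpB]; split=> // Y XY h [_ GY hh skh sh].
have sgh : smor (g *m h).
  split=> //; first exact: hom_mulmx.
    apply: strict_eqmx (strict_preim GB hg skg skh).
    by rewrite andbC; exact: kermx_mulmx.
  by apply: strict_eqmx sh; apply/eqmxP/eqmx_sym; exact: eqmxMfull.
by apply: (row_full_inj fg); rewrite mulmx0 (lperpB _ XY _ sgh).
Qed.

Lemma lperp_strict_ext (M N K : rmod) :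
  strict_ext G M N K -> lperp G X M -> lperp G X K -> lperp G X N.
Proof.
move=> [GM [GN [GK [f [g [[hf hg ff fg /eqmxP kg] sf]]]]]] [_ lperpM] [_ lperpK].
split=> // Y XY h [_ GY hh skh sh].
have sfh : smor (f *m h).
  split=> //; first exact: hom_mulmx.
    apply: strict_eqmx (strict_preim_free GM hf ff skh).
    by rewrite andbC; exact: kermx_mulmx.
  exact: (strict_img hh (strictW skh) sh sf).
have le_kgh : (kermx g <= kermx h)%MS by rewrite -kg sub_kermx (lperpM _ XY _ sfh).
have [hh' gh'] := hom_factor_full hg fg hh le_kgh.
set h' := pinvmx g *m h in hh' gh'.
have sh' : smor h'.
  split=> //; last by apply: strict_eqmx sh; rewrite -gh'; apply/eqmxP; exact: eqmxMfull.
  apply: (@strict_eqmx _ _ _ (kermx h *m g)).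
    rewrite sub_kermx -mulmxA gh' mulmx_ker eqxx /=.
    have gK := mulmxKpV (submx_full (kermx h') fg).
    by rewrite -gK submxMr // sub_kermx -gh' mulmxA gK mulmx_ker.
  have sf' : strict (kermx g) by apply: strict_eqmx sf; apply/eqmxP.
  exact: (strict_img hg (strictW sf') (strict_row_full GK fg) skh).
by rewrite -gh' (lperpK _ XY _ sh') mulmx0.
Qed.

Lemma lperp_pseudo_torsion (M : rmod) : G M -> pseudo_torsion G (lperp G X).
Proof.
move=> GM; split; first by exists (zero_rmod A); exact: lperp_zero GM.
- by move=> N [].
- exact: lperp_strict_quot.
exact: lperp_strict_ext.
Qed.

Lemma sub_lperp_perp (M : rmod) : G M -> X M -> lperp G (perp G X) M.
Proof. by move=> GM XM; split=> // Y [_ perpY] f; exact: perpY. Qed.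

Lemma sub_perp_lperp (M : rmod) : G M -> X M -> perp G (lperp G X) M.
Proof. by move=> GM XM; split=> // Y [_ lperpY] f; exact: lperpY. Qed.

End Orthogonal.

Definition subobj_in (X : mclass A) (B : rmod) k (U : 'M[F]_(k, rdim B)) :=
  strict U /\
  exists M (f : 'M[F]_(rdim M, rdim B)), [/\ X M, hom f, row_free f & (f == U)%MS].

Definition quotient_in (X : mclass A) (B : rmod) k (U : 'M[F]_(k, rdim B)) :=
  strict U /\
  exists C (g : 'M[F]_(rdim B, rdim C)), [/\ X C, hom g, row_full g & (kermx g == U)%MS].

Section PseudoTorsion.
Variable P : mclass A.
Hypothesis pP : pseudo_torsion G P.

Lemma pseudo_torsion_zero : P (zero_rmod A).
Proof.
have [[M PM] PG Pquot _] := pP; apply: (Pquot M _ _ PM); have GM := PG _ PM.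
split=> //; split; first exact: G_zero GM.
exists 0; split; [exact: hom0 | by rewrite /row_full mxrank0 |].
by apply: strict_eqmx (strict1 GM); apply/eqmxP/eqmx_sym; exact: kermx0.
Qed.

Lemma subobj_in_strict_mor (X0 B : rmod) (h : 'M[F]_(rdim X0, rdim B)) :
  P X0 -> strict_mor G h -> subobj_in P h.
Proof.
have [_ PG Pquot _] := pP; move=> PX0 [GX0 _ hh skh sh]; split=> //.
have [K [c [e [[GK hc fc] [he fe ce]]]]] := hom_image_factor GX0 hh.
exists K, e; split=> //; last by rewrite -ce; apply/eqmxP/eqmx_sym; exact: eqmxMfull.
apply: (Pquot X0 K _ PX0); split=> //; split=> //; exists c; split=> //.
by apply: strict_eqmx skh; rewrite -ce; exact: kermx_mulmx_free.
Qed.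

Lemma subobj_in_preim (M Y : rmod) k l (T : 'M[F]_(k, rdim M)) (q : 'M[F]_(rdim M, rdim Y))
    (S : 'M[F]_(l, rdim Y)) :
  G M -> hom q -> row_full q -> (kermx q == T)%MS ->
  subobj_in P T -> subobj_in P S -> subobj_in P (preim q S).
Proof.
have [_ PG _ Pext] := pP.
move=> GM hq fq /eqmxP kq [sT [X [fT [PX hfT ffT /eqmxP fTT]]]].
move=> [sS [K [eK [PK heK feK /eqmxP eKS]]]].
have skq : strict (kermx q) by apply: strict_eqmx sT; apply/eqmxP/eqmx_sym.
have sT' := strict_preim GM hq skq sS; split=> //.
have [N [E [hE fE /eqmxP ET']]] := sub_rmod_exists (strict_submod sT').
have fTE : (fT == E :&: kermx q)%MS.
  rewrite fTT -kq sub_capmx ET' sub_preim mulmx_ker sub0mx submx_refl /=.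
  by rewrite fTT -kq capmxSr.
have EqS : (E *m q :=: S)%MS.
  apply: eqmx_trans (eqmxMr q ET') _; apply: eqmx_trans (preimM q S) _.
  by apply/capmx_idPl; exact: submx_full.
have eKE : (eK == E *m q)%MS by apply/eqmxP; exact: eqmx_trans eKS (eqmx_sym EqS).
have [f0 f0E [g0 ses0]] := ses_sub_rmod hq hfT ffT hE fE heK feK fTE eKE.
have GN := G_ext ses0 (PG _ PX) (PG _ PK).
have sf0 : strict f0.
  apply: strict_eqmx (strict_preim_free GN hE fE sT).
  by rewrite -(submxMfree _ _ fE) f0E fTT -sub_preim submx_refl sub_preim f0E fTT submx_refl.
have PN : P N.
  apply: (Pext X N K _ PX PK).
  by split; [exact: PG | split=> //; split; [exact: PG | exists f0, g0]].
by exists N, E; split=> //; apply/eqmxP.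
Qed.

Lemma perp_quot_maximal (M Y : rmod) (T : 'M[F]_(rdim M)) (q : 'M[F]_(rdim M, rdim Y)) :
  G M -> hom q -> row_full q -> (kermx q == T)%MS -> subobj_in P T ->
  (forall T' : 'M[F]_(rdim M), subobj_in P T' -> \rank T' <= \rank T)%N ->
  perp G P Y.
Proof.
move=> GM hq fq kq PT maxT; split; first exact: G_quot hq fq GM.
move=> X0 PX0 h sh.
have PT' := subobj_in_preim GM hq fq kq PT (subobj_in_strict_mor PX0 sh).
have Tq : T *m q = 0 by apply/eqP; rewrite -sub_kermx (elimT eqmxP kq) submx_refl.
have le_TT' : (T <= preim q h)%MS by rewrite sub_preim Tq sub0mx.
have eTT' : (T == preim q h)%MS.
  by rewrite -(geq_leqif (mxrank_leqif_eq le_TT')); exact: maxT.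
have : (h <= T *m q)%MS.
  rewrite (eqmxMr q (elimT eqmxP eTT')) preimM sub_capmx submx_refl.
  exact: submx_full.
by rewrite Tq => /submx0null.
Qed.

Lemma lperp_perp_pseudo_torsion (M : rmod) : lperp G (perp G P) M -> P M.
Proof.
have [_ PG Pquot _] := pP; move=> [GM lperpM].
pose Pdim r := exists T : 'M[F]_(rdim M), subobj_in P T /\ \rank T = r.
have Pdim0 : Pdim 0%N.
  exists 0; split; last exact: mxrank0.
  split; first exact: strict0.
  exists (zero_rmod A), 0; split; [exact: pseudo_torsion_zero | exact: hom0 | |].
    by rewrite /row_free mxrank0.
  by rewrite !sub0mx.
have le_dim r : Pdim r -> (r <= rdim M)%N by move=> [T [_ <-]]; exact: rank_leq_col.
have [r [T [PT rT]] maxT] := ex_maximal Pdim0 le_dim.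
have [Y [q [hq fq kq]]] := quot_rmod_exists (strict_submod PT.1).
have perpY : perp G P Y.
  by apply: (perp_quot_maximal GM hq fq kq PT) => T' PT'; rewrite rT; apply: maxT; exists T'.
have sq : strict_mor G q.
  split=> //; [exact: perpY.1 | | exact: strict_row_full perpY.1 fq].
  by apply: strict_eqmx PT.1; rewrite andbC.
have le_1T : (1%:M <= T)%MS by rewrite -(elimT eqmxP kq) (lperpM _ perpY q sq) kermx0.
have [sT [X [fT [PX hfT ffT /eqmxP fTT]]]] := PT.
apply: (Pquot X M _ PX); split; first exact: PG.
split=> //; exists fT; split=> //; first by rewrite -sub1mx fTT.
exact: strict_kermx_free (PG _ PX) ffT.
Qed.

End PseudoTorsion.

Section PseudoTorsionfree.
Variable Q : mclass A.
Hypothesis pQ : pseudo_torsionfree G Q.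

Lemma pseudo_torsionfree_zero : Q (zero_rmod A).
Proof.
have [[M QM] QG Qsub _] := pQ; have GM := QG _ QM.
apply: (Qsub M _ (0 : 'M_(rdim M)) QM (strict0 _ GM) _ 0 (G_zero GM) (hom0 _ _)).
  by rewrite /row_free mxrank0.
by rewrite !sub0mx.
Qed.

Lemma quotient_in_strict_mor (N Z : rmod) (h : 'M[F]_(rdim N, rdim Z)) :
  Q Z -> strict_mor G h -> quotient_in Q (kermx h).
Proof.
have [_ _ Qsub _] := pQ; move=> QZ [GN _ hh skh sh]; split=> //.
have [K [c [e [[GK hc fc] [he fe ce]]]]] := hom_image_factor GN hh.
exists K, c; split=> //; last by rewrite -ce andbC; exact: kermx_mulmx_free.
apply: (Qsub Z _ h QZ sh K e GK he fe).
by rewrite -ce; apply/eqmxP/eqmx_sym; exact: eqmxMfull.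
Qed.

(* Y / (V *m E) is a strict extension of N / V by Y / U. *)
Lemma quotient_in_mulmx (Y N : rmod) k l (U : 'M[F]_(k, rdim Y)) (E : 'M[F]_(rdim N, rdim Y))
    (V : 'M[F]_(l, rdim N)) :
  G Y -> G N -> hom E -> row_free E -> (E == U)%MS ->
  quotient_in Q U -> quotient_in Q V -> quotient_in Q (V *m E).
Proof.
have [_ QG _ Qext] := pQ.
move=> GY GN hE fE /eqmxP EU [sU [C [g [QC hg fg /eqmxP kgU]]]].
move=> [sV [K [c [QK hc fc /eqmxP kcV]]]].
have sE : strict E by apply: strict_eqmx sU; apply/eqmxP/eqmx_sym.
have sW := strict_img_free GN hE fE sE sV; split=> //.
have [C' [q [hq fq /eqmxP kqW]]] := quot_rmod_exists (strict_submod sW).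
have kqcE : (kermx q == kermx c *m E)%MS.
  by apply/eqmxP; exact: eqmx_trans kqW (eqmxMr E (eqmx_sym kcV)).
have kgE : (kermx g == E)%MS by apply/eqmxP; exact: eqmx_trans kgU (eqmx_sym EU).
have [f0 f0Eq [g0 ses0]] := ses_quot_rmod hE fE hq fq hc fc hg fg kqcE kgE.
have GC' := G_quot hq fq GY.
have sf0 : strict f0.
  have skq : subobj (kermx q) by apply/strictW/(strict_eqmx _ sW); apply/eqmxP/eqmx_sym.
  apply: strict_eqmx (strict_img hq skq (strict_row_full GC' fq) sU); apply/eqmxP.
  exact: eqmx_trans (eqmxMr q (eqmx_sym EU)) (eqmx_sym f0Eq).
have QC' : Q C'.
  apply: (Qext K C' C _ QK QC).
  by split; [exact: QG | split=> //; split; [exact: QG | exists f0, g0]].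
by exists C', q; split=> //; apply/eqmxP.
Qed.

Lemma perp_lperp_pseudo_torsionfree (Y : rmod) : perp G (lperp G Q) Y -> Q Y.
Proof.
have [_ QG Qsub _] := pQ; move=> [GY perpY].
pose Qdim r := exists k (U : 'M[F]_(k, rdim Y)), quotient_in Q U /\ \rank U = r.
have Qdim1 : Qdim (rdim Y).
  exists (rdim Y), 1%:M; split; last exact: mxrank1.
  split; first exact: strict1.
  exists (zero_rmod A), 0; split; [exact: pseudo_torsionfree_zero | exact: hom0 | |].
    by rewrite /row_full mxrank0.
  by apply/eqmxP; exact: kermx0.
have [r [k [U [QU rU]]] minU] := ex_minimal Qdim1.
have [N [E [hE fE EU]]] := sub_rmod_exists (strict_submod QU.1).
have GN := G_subobj_rmod (strictW QU.1) hE fE EU.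
have lperpN : lperp G Q N.
  split=> // Z QZ h sh.
  have QW := quotient_in_mulmx GY GN hE fE EU QU (quotient_in_strict_mor QZ sh).
  have le_WU : (kermx h *m E <= U)%MS by rewrite -(elimT eqmxP EU) submxMl.
  have eWU : (kermx h *m E == U)%MS.
    by rewrite -(geq_leqif (mxrank_leqif_eq le_WU)) rU; apply: minU; exists _, (kermx h *m E).
  have : (1%:M *m E <= kermx h *m E)%MS by rewrite mul1mx (elimT eqmxP eWU) -(elimT eqmxP EU).
  by rewrite submxMfree // sub_kermx mul1mx => /eqP.
have sE : strict_mor G E.
  split=> //; first exact: strict_kermx_free.
  by apply: strict_eqmx QU.1; rewrite andbC.
have U0 : \rank U = 0%N by rewrite -(eqmx_rank EU) (perpY _ lperpN E sE) mxrank0.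
have [_ [C [g [QC hg fg /eqmxP kgU]]]] := QU.
have fg' : row_free g by rewrite -kermx_eq0 -mxrank_eq0 kgU U0.
exact: (Qsub C _ 1%:M QC (strict1 (QG _ QC)) Y g GY hg fg' (row_full_eq1 fg)).
Qed.

End PseudoTorsionfree.

End TorsionClass.

Theorem mainTheorem8 (F : fieldType) (A : falgType F) (G : mclass A) :
  torsion_class G ->
  (forall P : mclass A, pseudo_torsion G P ->
     pseudo_torsionfree G (perp G P) /\
     (forall M, lperp G (perp G P) M <-> P M)) /\
  (forall Q : mclass A, pseudo_torsionfree G Q ->
     pseudo_torsion G (lperp G Q) /\
     (forall M, perp G (lperp G Q) M <-> Q M)).
Proof.
move=> tG; split=> [P pP | Q pQ].
- have [[M PM] PG _ _] := pP; split; first exact: perp_pseudo_torsionfree (PG _ PM).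
  move=> N; split; first exact: lperp_perp_pseudo_torsion.
  by move=> PN; exact: sub_lperp_perp (PG _ PN) PN.
- have [[M QM] QG _ _] := pQ; split; first exact: lperp_pseudo_torsion (QG _ QM).
  move=> N; split; first exact: perp_lperp_pseudo_torsionfree.
  by move=> QN; exact: sub_perp_lperp (QG _ QN) QN.
Qed.
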